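(* For every integer $n\ge 2$, \[ \sum_{k=2}^{n}(-1)^{k}\genfrac{\{}{\}}{0pt}{}{n}{k}(k-1)!\,H_{k-1}H_{k}=\frac{n+1}{2}B_{n-2}. \]
   Context: $\genfrac{\{}{\}}{0pt}{}{n}{k}$ denotes the Stirling numbers of the second kind, $H_k=\sum_{i=1}^k 1/i$ the harmonic numbers, and $B_n$ the Bernoulli numbers, $\sum_{n\ge0}B_n t^n/n!=t/(e^t-1)$ (so $B_1=-1/2$). *)

From mathcomp Require Import all_boot all_order all_algebra.
Set Implicit Arguments. Unset Strict Implicit. Unset Printing Implicit Defensive.
Import Order.TTheory GRing.Theory Num.Theory.
Local Open Scope ring_scope.

Fixpoint stirling2 (n k : nat) : nat :=
  match n, k with
  | 0, 0 => 1
  | 0, _.+1 => 0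
  | _.+1, 0 => 0
  | n'.+1, k'.+1 => (k'.+1 * stirling2 n' k + stirling2 n' k')%N
  end.

Definition harmonic (k : nat) : rat := \sum_(1 <= i < k.+1) (i%:R)^-1.

(* Bernoulli numbers with t/(e^t-1) = sum B_n t^n/n!  (so B_1 = -1/2), via the
   equivalent standard recurrence sum_{k=0}^{m} C(m+1,k) B_k = 0 for m >= 1. *)
Fixpoint bern_list (n : nat) : seq rat :=
  match n with
  | 0 => [:: 1]
  | m.+1 =>
      let l := bern_list m in
      rcons l (- (m.+2%:R)^-1 * \sum_(k < m.+1) ('C(m.+2, k))%:R * nth 0 l k)
  end.

Definition bernoulli (n : nat) : rat := nth 0 (bern_list n) n.

From HB Require Import structures.
From mathcomp Require Import all_boot all_order all_algebra.
From mathcomp Require Import ring.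
Set Implicit Arguments. Unset Strict Implicit. Unset Printing Implicit Defensive.
Import Order.TTheory GRing.Theory Num.Theory.
Local Open Scope ring_scope.

(* Let L be the linear functional on Q[x] with L(x^i) = B_i.  The recurrence
   defining the Bernoulli numbers says exactly that L(p(x+1) - p(x)) = p'(0).
   The polynomial p_k = (x-1)(x-2)...(x-k) has forward difference k p_(k-1), so
   L(p_k) and L(p_k') are read off the coefficients of x and x^2 in p_(k+1),
   which are given by H_(k+1) and H_(k+1)^2 - sum_(i <= k+1) 1/i^2.
   Let F be the functional with F(x^n) = (n+1)/2 B_(n-2).  Then
   F(x g) = L(g')/2 + L'(g), where L'(x^i) = B_(i-1) satisfies L'(x g) = L(g),
   which evaluates L'(p_k) by recursion on k.  As x(x-1)...(x-k+1) = x p_(k-1),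
   F sends the falling factorial of order k to (-1)^k (k-1)! H_(k-1) H_k, and the
   identity is F applied to x^n = sum_k S(n,k) x(x-1)...(x-k+1). *)

Section Umbral.
Variable R : comNzRingType.
Implicit Types (w : nat -> R) (p : {poly R}).

Definition umbral w p : R := \sum_(i < size p) p`_i * w i.

Lemma umbral_sum_coef w p N : (size p <= N)%N ->
  umbral w p = \sum_(i < N) p`_i * w i.
Proof.
move=> leN; rewrite /umbral (big_ord_widen _ (fun i => p`_i * w i) leN).
rewrite big_mkcond; apply: eq_bigr => i _.
by case: ltnP => // /(nth_default 0) ->; rewrite mul0r.
Qed.

Lemma umbral_is_linear w : linear_for *%R (umbral w).
Proof.
move=> c p q; pose N := maxn (size p) (size q).
have leN : (size (c *: p + q)%R <= N)%N.
  by rewrite (leq_trans (size_polyD _ _)) // geq_max !leq_max size_scale_leq leqnn orbT.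
rewrite (umbral_sum_coef w leN) (umbral_sum_coef w (leq_maxl (size p) (size q))).
rewrite (umbral_sum_coef w (leq_maxr (size p) (size q))) mulr_sumr -big_split.
by apply: eq_bigr => i _; rewrite coefD coefZ mulrDl mulrA.
Qed.

HB.instance Definition _ w := GRing.isLinear.Build R {poly R} R *%R (umbral w)
  (umbral_is_linear w).

Lemma eq_umbral w1 w2 : w1 =1 w2 -> umbral w1 =1 umbral w2.
Proof. by move=> eq_w p; apply: eq_bigr => i _; rewrite eq_w. Qed.

Lemma umbral_weightD w1 w2 p :
  umbral (fun i => w1 i + w2 i) p = umbral w1 p + umbral w2 p.
Proof. by rewrite -big_split; apply: eq_bigr => i _; rewrite mulrDr. Qed.

Lemma umbral_weightZ c w p : umbral (fun i => c * w i) p = c * umbral w p.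
Proof. by rewrite mulr_sumr; apply: eq_bigr => i _; rewrite mulrCA. Qed.

Lemma umbral_pick m p : umbral (fun i => (i == m)%:R) p = p`_m.
Proof.
rewrite (umbral_sum_coef _ (leq_maxl (size p) m.+1)).
under eq_bigr => i _ do rewrite mulr_natr mulrb.
by rewrite -big_mkcond big_ord1_eq leq_max ltnSn orbT.
Qed.

Lemma umbral_Xn w n : umbral w 'X^n = w n.
Proof.
rewrite /umbral size_polyXn.
under eq_bigr => i _ do rewrite coefXn mulr_natl mulrb.
by rewrite -big_mkcond big_ord1_eq ltnSn.
Qed.

Lemma umbral_linear_eq (f : {linear {poly R} -> {poly R}}) w w' :
  (forall n, umbral w (f 'X^n) = w' n) -> forall p, umbral w (f p) = umbral w' p.
Proof.
move=> fXn p; rewrite -[p]coefK poly_def !linear_sum /=.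
by apply: eq_bigr => i _; rewrite !linearZ /= fXn umbral_Xn.
Qed.

Lemma umbral_mulX w p : umbral w ('X * p) = umbral (fun i => w i.+1) p.
Proof.
apply: (umbral_linear_eq (f := 'X \*o idfun)) => n /=.
by rewrite -exprS umbral_Xn.
Qed.

Lemma umbral_deriv w p : umbral w p^`() = umbral (fun i => i%:R * w i.-1) p.
Proof.
apply: (umbral_linear_eq (f := deriv)) => n /=.
by rewrite derivXn raddfMn /= umbral_Xn mulr_natl.
Qed.

Lemma umbral_shift w p : umbral w (p \Po ('X + 1)) =
  umbral (fun i => \sum_(j < i.+1) 'C(i, j)%:R * w j) p.
Proof.
apply: (umbral_linear_eq (f := comp_poly ('X + 1))) => n /=.
rewrite comp_Xn_poly exprD1n linear_sum; apply: eq_bigr => j _.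
by rewrite raddfMn /= umbral_Xn mulr_natl.
Qed.

End Umbral.

Section FallingFactorial.
Variable R : comNzRingType.
Implicit Types (p : {poly R}) (c : R).

Definition ffpoly k : {poly R} := \prod_(i < k) ('X - i%:R%:P).

Definition ffpoly1 k : {poly R} := \prod_(i < k) ('X - i.+1%:R%:P).

Lemma ffpolyS k : ffpoly k.+1 = 'X * ffpoly1 k.
Proof. by rewrite /ffpoly big_ord_recl /= subr0. Qed.

Lemma ffpolySr k : ffpoly k.+1 = ffpoly k * ('X - k%:R%:P).
Proof. by rewrite /ffpoly big_ord_recr. Qed.

Lemma ffpoly1Sr k : ffpoly1 k.+1 = ffpoly1 k * ('X - k.+1%:R%:P).
Proof. by rewrite /ffpoly1 big_ord_recr. Qed.

Lemma ffpoly1_shift k : ffpoly1 k \Po ('X + 1) = ffpoly k.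
Proof.
rewrite /ffpoly1 rmorph_prod; apply: eq_bigr => i _.
by rewrite /= comp_polyB comp_polyX comp_polyC -natr1 polyCD polyC1; ring.
Qed.

Definition fwd_diff p := p \Po ('X + 1) - p.

Lemma fwd_diff_ffpoly1 k : fwd_diff (ffpoly1 k.+1) = k.+1%:R *: ffpoly1 k.
Proof. by rewrite /fwd_diff ffpoly1_shift ffpolyS ffpoly1Sr -mul_polyC; ring. Qed.

Lemma fwd_diff_deriv p : fwd_diff p^`() = (fwd_diff p)^`().
Proof. by rewrite /fwd_diff derivB deriv_comp derivD derivX derivC addr0 mulr1. Qed.

Lemma stirling2_eq0 n k : (n < k)%N -> stirling2 n k = 0%N.
Proof. by elim: n k => [|n IHn] [|k] //= ltnk; rewrite !IHn ?muln0 // ltnW. Qed.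

Lemma Xn_stirling2 n N : (n < N)%N ->
  'X^n = \sum_(k < N) (stirling2 n k)%:R *: ffpoly k.
Proof.
elim: n N => [|n IHn] [|N] // ltnN.
  rewrite big_ord_recl big1 => [|k _]; last by rewrite scale0r.
  by rewrite scale1r /ffpoly big_ord0 addr0.
have XffpolyE k : 'X * ffpoly k = ffpoly k.+1 + k%:R *: ffpoly k.
  by rewrite ffpolySr -mul_polyC; ring.
rewrite exprS (IHn N.+1 (ltnW ltnN)) mulr_sumr.
under eq_bigr => k _ do rewrite -scalerAr XffpolyE scalerDr.
rewrite big_split /= big_ord_recr /= stirling2_eq0 // scale0r addr0.
rewrite [X in _ + X]big_ord_recl /= scale0r scaler0 add0r.
rewrite [RHS]big_ord_recl /= scale0r add0r -big_split /=.
apply: eq_bigr => k _; rewrite natrD scalerDl addrC scalerA -natrM mulnC.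
by rewrite /bump leq0n /= add1n.
Qed.

Lemma umbral_Xn_stirling2 (w : nat -> R) n :
  w n = \sum_(0 <= k < n.+1) (stirling2 n k)%:R * umbral w (ffpoly k).
Proof.
rewrite big_mkord -umbral_Xn (Xn_stirling2 (ltnSn n)) linear_sum.
by apply: eq_bigr => k _; rewrite linearZ.
Qed.

Lemma coef0_mulXsubC p c : (p * ('X - c%:P))`_0 = - (p`_0 * c).
Proof. by rewrite mulrBr coefB coefMX coefMC sub0r. Qed.

Lemma coefS_mulXsubC p c i : (p * ('X - c%:P))`_i.+1 = p`_i - p`_i.+1 * c.
Proof. by rewrite mulrBr coefB coefMX coefMC. Qed.

Lemma coef0_ffpoly1 k : (ffpoly1 k)`_0 = (-1) ^+ k * k`!%:R.
Proof.
elim: k => [|k IHk]; first by rewrite /ffpoly1 big_ord0 coefC expr0 mul1r.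
by rewrite ffpoly1Sr coef0_mulXsubC IHk factS natrM exprS; ring.
Qed.

End FallingFactorial.

Arguments ffpoly {R} k.
Arguments ffpoly1 {R} k.

Definition harmonic2 (k : nat) : rat := \sum_(1 <= i < k.+1) (i%:R ^+ 2)^-1.

Lemma harmonic0 : harmonic 0 = 0.
Proof. by rewrite /harmonic big_geq. Qed.

Lemma harmonicS k : harmonic k.+1 = harmonic k + k.+1%:R^-1.
Proof. by rewrite /harmonic big_nat_recr. Qed.

Lemma harmonic2S k : harmonic2 k.+1 = harmonic2 k + (k.+1%:R ^+ 2)^-1.
Proof. by rewrite /harmonic2 big_nat_recr. Qed.

Lemma coef1_ffpoly1 k :
  (ffpoly1 k)`_1 = (-1) ^+ k.+1 * k`!%:R * harmonic k :> rat.
Proof.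
elim: k => [|k IHk]; first by rewrite /ffpoly1 big_ord0 coefC harmonic0 mulr0.
rewrite ffpoly1Sr coefS_mulXsubC IHk coef0_ffpoly1 factS natrM harmonicS !exprS.
by field; rewrite nat1r pnatr_eq0.
Qed.

Lemma coef2_ffpoly1 k : (ffpoly1 k)`_2 =
  (-1) ^+ k * k`!%:R * (harmonic k ^+ 2 - harmonic2 k) / 2 :> rat.
Proof.
elim: k => [|k IHk].
  by rewrite /ffpoly1 big_ord0 coefC harmonic0 /harmonic2 big_geq.
rewrite ffpoly1Sr coefS_mulXsubC IHk coef1_ffpoly1 factS natrM.
rewrite harmonicS harmonic2S !exprS.
by field; rewrite nat1r pnatr_eq0.
Qed.

Lemma size_bern_list m : size (bern_list m) = m.+1.
Proof. by elim: m => //= m IHm; rewrite size_rcons IHm. Qed.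

Lemma nth_bern_list m k : (k <= m)%N -> nth 0 (bern_list m) k = bernoulli k.
Proof.
elim: m => [|m IHm]; first by rewrite leqn0 => /eqP ->.
rewrite leq_eqVlt => /orP[/eqP -> // | ltkm].
by rewrite /= nth_rcons size_bern_list ltkm IHm.
Qed.

Lemma bernoulli_binomial_sum i :
  \sum_(j < i.+1) 'C(i, j)%:R * bernoulli j = bernoulli i + (i == 1)%:R.
Proof.
rewrite big_ord_recr /= binn mul1r addrC; congr (_ + _).
case: i => [|[|m]]; rewrite ?big_ord0 ?big_ord1 ?bin0 ?mul1r //.
rewrite big_ord_recr /= binSn.
have -> : bernoulli m.+1 = - m.+2%:R^-1 *
    \sum_(k < m.+1) 'C(m.+2, k)%:R * bernoulli k.
  rewrite /bernoulli /= nth_rcons size_bern_list ltnn eqxx; congr (_ * _).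
  by apply: eq_bigr => k _; rewrite nth_bern_list // -ltnS.
by rewrite mulrA mulrN mulfV ?pnatr_eq0 // mulN1r subrr.
Qed.

Lemma umbral_bernoulli_fwd_diff (p : {poly rat}) :
  umbral bernoulli (fwd_diff p) = p`_1.
Proof.
rewrite /fwd_diff linearB /= umbral_shift.
rewrite (eq_umbral (w2 := fun i => bernoulli i + (i == 1)%:R)) => [|i]; last first.
  exact: bernoulli_binomial_sum.
by rewrite umbral_weightD umbral_pick addrC addKr.
Qed.

Lemma umbral_bernoulli_ffpoly1 k :
  umbral bernoulli (ffpoly1 k) = (-1) ^+ k * k`!%:R * harmonic k.+1.
Proof.
have := umbral_bernoulli_fwd_diff (ffpoly1 k.+1).
rewrite fwd_diff_ffpoly1 linearZ /= coef1_ffpoly1 factS natrM harmonicS => eqS.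
apply: (mulfI (_ : k.+1%:R != 0)); first by rewrite pnatr_eq0.
by rewrite eqS !exprS; field; rewrite nat1r pnatr_eq0.
Qed.

Lemma umbral_bernoulli_deriv_ffpoly1 k : umbral bernoulli (ffpoly1 k)^`() =
  (-1) ^+ k.+1 * k`!%:R * (harmonic k.+1 ^+ 2 - harmonic2 k.+1).
Proof.
have := umbral_bernoulli_fwd_diff (ffpoly1 k.+1)^`().
rewrite fwd_diff_deriv fwd_diff_ffpoly1 derivZ linearZ /= coef_deriv coef2_ffpoly1.
rewrite factS natrM => eqS.
apply: (mulfI (_ : k.+1%:R != 0)); first by rewrite pnatr_eq0.
by rewrite eqS !exprS -mulr_natr; field.
Qed.

Definition bernoulli_pred (i : nat) : rat := if i is j.+1 then bernoulli j else 0.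

Lemma umbral_bernoulli_pred_ffpoly1 k : umbral bernoulli_pred (ffpoly1 k) =
  (-1) ^+ k.+1 * k`!%:R * (harmonic k ^+ 2 + harmonic2 k) / 2.
Proof.
elim: k => [|k IHk].
  by rewrite /ffpoly1 big_ord0 -(expr0 'X) umbral_Xn harmonic0 /harmonic2 big_geq.
rewrite ffpoly1Sr mulrC mulrBl linearB /= umbral_mulX mul_polyC linearZ /=.
rewrite umbral_bernoulli_ffpoly1 IHk factS natrM harmonicS harmonic2S !exprS.
by field; rewrite nat1r pnatr_eq0.
Qed.

Definition scaled_bernoulli (n : nat) : rat :=
  if n is j.+2 then j.+3%:R / 2 * bernoulli j else 0.

Lemma umbral_scaled_bernoulli_mulX (g : {poly rat}) :
  umbral scaled_bernoulli ('X * g) =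
  umbral bernoulli g^`() / 2 + umbral bernoulli_pred g.
Proof.
rewrite umbral_mulX umbral_deriv mulrC -umbral_weightZ -umbral_weightD.
apply: eq_umbral => -[|i] /=; first by rewrite !mulr0 add0r.
by rewrite -[i.+3]addn2 -[i.+1]addn1 !natrD; field.
Qed.

Lemma umbral_scaled_bernoulli_ffpoly k : umbral scaled_bernoulli (ffpoly k) =
  (-1) ^+ k * (k.-1)`!%:R * harmonic k.-1 * harmonic k.
Proof.
case: k => [|k]; first by rewrite /ffpoly big_ord0 -(expr0 'X) umbral_Xn harmonic0 !mulr0.
rewrite ffpolyS umbral_scaled_bernoulli_mulX umbral_bernoulli_deriv_ffpoly1.
rewrite umbral_bernoulli_pred_ffpoly1 /= harmonicS harmonic2S !exprS.
by field; rewrite nat1r pnatr_eq0.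
Qed.

Theorem theorem5 (n : nat) (hn : (2 <= n)%N) :
  \sum_(2 <= k < n.+1)
     (-1) ^+ k * (stirling2 n k)%:R * ((k.-1)`!)%:R * harmonic k.-1 * harmonic k
  = (n.+1)%:R / 2%:R * bernoulli (n - 2).
Proof.
case: n hn => [|[|m]] // _.
rewrite subn2 -[RHS]/(scaled_bernoulli m.+2) umbral_Xn_stirling2.
under [RHS]eq_bigr => k _ do rewrite umbral_scaled_bernoulli_ffpoly.
(* The terms k = 0 and k = 1 vanish since H_0 = 0. *)
rewrite big_ltn // big_ltn // !harmonic0 !(mulr0, mul0r) !add0r.
by apply: eq_bigr => k _; ring.
Qed.
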